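(* Assume that for all real $z\ge 1$ one has $\bigl|\sum_{n\le z}\mu(n)^2 - \tfrac{6}{\pi^2}z\bigr|\le 0.68\sqrt z$. Then for all real $z\geq 1$, \[ \Biggl|\sum_{n\leq z} \frac{\mu(n)^2}{n} - \frac{\log z}{\zeta(2)} - A\Biggr| \leq \frac{2.04}{\sqrt{z}}, \qquad\text{where } A=\frac{\gamma}{\zeta(2)}-2\frac{\zeta'(2)}{\zeta(2)^2}, \] $\gamma$ being the Euler–Mascheroni constant.
   Context: $\mu$ is the Möbius function and $\zeta$ the Riemann zeta function. *)

From mathcomp Require Import ssreflect ssrfun ssrbool eqtype ssrnat seq prime.
From Stdlib Require Import Reals ClassicalEpsilon.

(** Moebius function: mu 0 = 0 (convention, never used), mu n = (-1)^k if n is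
    squarefree with k distinct prime factors, and 0 otherwise. *)
Definition squarefree (n : nat) : bool :=
  (0 < n) && all (fun p => logn p n == 1) (primes n).

Definition mobius (n : nat) : Z :=
  if squarefree n then (if odd (size (primes n)) then (-1)%Z else 1%Z) else 0%Z.

Local Open Scope R_scope.

Fixpoint sum_1_to (f : nat -> R) (N : nat) : R :=
  match N with
  | O => 0
  | S k => sum_1_to f k + f (S k)
  end.

(** floor of a real number, as a natural number (for z >= 0). *)
Definition nat_floor (z : R) : nat := Z.to_nat (Int_part z).

Definition sum_le (f : nat -> R) (z : R) : R := sum_1_to f (nat_floor z).

Definition zeta (s : R) : R :=
  epsilon (inhabits 0) (fun l => infinite_sum (fun n => / Rpower (INR (S n)) s) l).

Definition zeta'2 : R :=
  epsilon (inhabits 0) (fun l => derivable_pt_lim zeta 2 l).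

Definition euler_gamma : R :=
  epsilon (inhabits 0)
    (fun l => Un_cv (fun N => sum_1_to (fun n => / INR n) N - ln (INR N)) l).

(* Writing mu(n)^2 = sum_{d^2 | n} mu(d) turns S(N) = sum_{n <= N} mu(n)^2 / n into
   sum_d mu(d)/d^2 H(N/d^2), with H the harmonic numbers.  At N = K^2 only d <= K
   contribute, and H(x) = log x + gamma + O(1/x) gives
     S(K^2) = M log(K^2) + gamma M - 2 P + O(log K / K),
   where M = sum mu(d)/d^2 and P = sum mu(d) log d / d^2.  Convolving these series
   with zeta(2) = sum 1/n^2 and -zeta'(2) = sum log n / n^2 (zeta is differentiated
   termwise) gives M = 1/zeta(2) and P = zeta'(2)/zeta(2)^2, so the constant is A.
   Independently, partial summation against |Q(z) - c z| <= B sqrt z, where Q counts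
   squarefree numbers, shows that X(z) = S(z) - c log z moves by at most 3B/sqrt z
   beyond z.  Comparing with the squares forces c = M (the value 6/pi^2 of the
   hypothesis is never used), and letting K grow yields |X(z) - A| <= 3B/sqrt z. *)

From Stdlib Require Import Reals Lra Lia ZArith ClassicalEpsilon.
From mathcomp Require Import ssreflect ssrfun ssrbool eqtype ssrnat seq div prime.
From Coquelicot Require Import Coquelicot.
Open Scope R_scope.

Lemma sum_1_toS f N : sum_1_to f N.+1 = sum_1_to f N + f N.+1.
Proof. by []. Qed.

Lemma sum_1_to_ext f g N : (forall k, (0 < k <= N)%N -> f k = g k) ->
  sum_1_to f N = sum_1_to g N.
Proof.
elim: N => [//|N IH] fg /=; rewrite fg ?ltnSn ?andbT // IH // => k /andP[k0 kN].
by rewrite fg // k0 (leq_trans kN).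
Qed.

Lemma sum_1_to_add f g N :
  sum_1_to (fun k => f k + g k) N = sum_1_to f N + sum_1_to g N.
Proof. elim: N => [|N IH] /=; [lra | rewrite IH; lra]. Qed.

Lemma sum_1_to_scal c f N : sum_1_to (fun k => c * f k) N = c * sum_1_to f N.
Proof. elim: N => [|N IH] /=; [lra | rewrite IH; lra]. Qed.

Lemma sum_1_to_opp f N : sum_1_to (fun k => - f k) N = - sum_1_to f N.
Proof. elim: N => [|N IH] /=; [lra | rewrite IH; lra]. Qed.

Lemma sum_1_to_sub f g N :
  sum_1_to (fun k => f k - g k) N = sum_1_to f N - sum_1_to g N.
Proof. elim: N => [|N IH] /=; [lra | rewrite IH; lra]. Qed.

Lemma sum_1_to_const c N : sum_1_to (fun _ => c) N = INR N * c.
Proof. elim: N => [|N IH]; first by rewrite /=; lra. by rewrite [LHS]/= IH S_INR; lra. Qed.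

Lemma sum_1_to_zero N : sum_1_to (fun _ => 0) N = 0.
Proof. by rewrite sum_1_to_const Rmult_0_r. Qed.

Lemma sum_1_to_le f g N : (forall k, (0 < k <= N)%N -> f k <= g k) ->
  sum_1_to f N <= sum_1_to g N.
Proof.
elim: N => [|N IH] fg /=; first lra.
have := fg N.+1; rewrite ltnSn => /(_ isT) le_last.
suff : sum_1_to f N <= sum_1_to g N by lra.
by apply: IH => k /andP[k0 kN]; apply: fg; rewrite k0 (leq_trans kN).
Qed.

Lemma Rabs_sum_1_to_le f N :
  Rabs (sum_1_to f N) <= sum_1_to (fun k => Rabs (f k)) N.
Proof.
elim: N => [|N IH] /=; first by rewrite Rabs_R0; lra.
by apply: Rle_trans (Rabs_triang _ _) _; lra.
Qed.

Lemma sum_1_to_addn f a b :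
  sum_1_to f (a + b) = sum_1_to f a + sum_1_to (fun k => f (a + k)%N) b.
Proof.
elim: b => [|b IH]; first by rewrite addn0 /=; lra.
by rewrite addnS /= IH addnS; lra.
Qed.

Lemma sum_1_to_widen f N N' : (N <= N')%N ->
  (forall k, (N < k <= N')%N -> f k = 0) -> sum_1_to f N' = sum_1_to f N.
Proof.
move=> /subnKC <-; move: (N' - N)%N => b f0; rewrite sum_1_to_addn.
rewrite (sum_1_to_ext (fun k => f (N + k)%N) (fun _ => 0)) ?sum_1_to_zero; first lra.
by move=> k /andP[k0 kb]; rewrite f0 // -addn1 !leq_add2l k0.
Qed.

Lemma sum_1_to_exchange (g : nat -> nat -> R) N1 N2 :
  sum_1_to (fun d => sum_1_to (g d) N2) N1 =
  sum_1_to (fun e => sum_1_to (g^~ e) N1) N2.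
Proof.
elim: N1 => [|N1 IH] /=; first by rewrite sum_1_to_zero.
by rewrite IH -sum_1_to_add.
Qed.

Lemma sum_1_to_multiples q f n : (0 < q)%N ->
  sum_1_to (fun d => if q %| d then f d else 0) n =
  sum_1_to (fun k => f (q * k)%N) (n %/ q).
Proof.
move=> q0; elim: n => [|n IH]; first by rewrite div0n.
rewrite /= IH (divnS _ q0); case qn : (q %| n.+1); last by rewrite add0n; lra.
by rewrite add1n /= -{1}(divnK qn) mulnC (divnS _ q0) qn add1n.
Qed.

Lemma sum_1_to_split_multiples q f n : (0 < q)%N ->
  sum_1_to f n = sum_1_to (fun k => f (q * k)%N) (n %/ q) +
                 sum_1_to (fun d => if q %| d then 0 else f d) n.
Proof.
move=> q0; rewrite -sum_1_to_multiples // -sum_1_to_add.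
by apply: sum_1_to_ext => k _; case: (q %| k); lra.
Qed.

Lemma primes_prime_mul p e : prime p -> (0 < e)%N -> ~~ (p %| e) ->
  perm_eq (primes (p * e)) (p :: primes e).
Proof.
move=> pp e0 npe; apply: uniq_perm => [|/=|q]; rewrite ?primes_uniq //.
  by rewrite mem_primes (negbTE npe) !andbF.
by rewrite in_cons (primesM _ (prime_gt0 pp) e0) (primes_prime pp) inE orbC.
Qed.

Lemma mobius_prime_mul p e : prime p -> (0 < e)%N -> ~~ (p %| e) ->
  mobius (p * e) = (- mobius e)%Z.
Proof.
move=> pp e0 npe; have pe := primes_prime_mul _ _ pp e0 npe.
have p0 := prime_gt0 pp; have pe0 : (0 < p * e)%N by rewrite muln_gt0 p0.
rewrite /mobius /squarefree pe0 e0 (perm_size pe) (perm_all _ pe) /=.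
rewrite (lognM _ p0 e0) (logn_prime _ pp) eqxx logn_coprime; last first.
  by rewrite prime_coprime.
have -> : all (fun q => logn q (p * e) == 1%N) (primes e) =
          all (fun q => logn q e == 1%N) (primes e).
  apply: eq_in_all => q; rewrite mem_primes => /and3P[_ _ qe].
  rewrite (lognM _ p0 e0) (logn_prime _ pp).
  suff /negbTE-> : q != p by rewrite add0n.
  by apply: contraNneq npe => <-.
by case: all => //; case: odd.
Qed.

Lemma mobius_sqr_mul p e : prime p -> (0 < e)%N -> mobius (p * p * e) = 0%Z.
Proof.
move=> pp e0; have p0 := prime_gt0 pp; rewrite /mobius /squarefree.
have pPe : p \in primes (p * p * e).
  by rewrite mem_primes pp !muln_gt0 p0 e0 -mulnA dvdn_mulr.
case: andP => // -[_ /allP/(_ p pPe)].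
rewrite -mulnA (lognM _ p0) ?muln_gt0 ?p0 // (lognM _ p0 e0) (logn_prime _ pp).
by rewrite eqxx; case: logn.
Qed.

Definition mu (n : nat) : R := IZR (mobius n).

Lemma mu1 : mu 1 = 1.
Proof. by []. Qed.

Lemma Rabs_mu_le1 n : Rabs (mu n) <= 1.
Proof.
rewrite /mu /mobius; case: squarefree; last by rewrite Rabs_R0; lra.
by case: odd; rewrite ?Rabs_Ropp Rabs_R1; lra.
Qed.

Lemma mu_prime_mul p k : prime p -> (0 < k)%N ->
  mu (p * k) = if p %| k then 0 else - mu k.
Proof.
move=> pp k0; rewrite /mu; case: ifP => [/dvdnP[k' kE] | npk].
  rewrite kE (mulnC k') mulnA mobius_sqr_mul //.
  by move: k0; rewrite kE muln_gt0 => /andP[].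
by rewrite mobius_prime_mul ?npk // opp_IZR.
Qed.

Lemma sum_mu_divisors n : (0 < n)%N ->
  sum_1_to (fun d => if d %| n then mu d else 0) n = if n == 1%N then 1 else 0.
Proof.
move=> n0; case: (ltngtP n 1) => [|n1|->]; [by rewrite ltnNge n0 | | by rewrite /= mu1; lra].
have pp := pdiv_prime n1; have p0 := prime_gt0 pp.
case/dvdnP: (pdiv_dvd n) n0 n1 => m ->; move: (pdiv n) pp p0 => p pp p0 mp0 _.
have m0 : (0 < m)%N by move: mp0; rewrite muln_gt0 => /andP[].
rewrite (sum_1_to_split_multiples p) // mulnK // (mulnC m).
rewrite (sum_1_to_ext _ (fun k => if k %| m then (if p %| k then 0 else - mu k) else 0));
  last by move=> k /andP[k0 _]; rewrite dvdn_pmul2l // mu_prime_mul.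
rewrite (sum_1_to_ext (fun d => if p %| d then 0 else if d %| p * m then mu d else 0)
                     (fun d => if p %| d then 0 else if d %| m then mu d else 0)); last first.
  by move=> d _; case: ifP => // npd; rewrite Gauss_dvdr // coprime_sym prime_coprime ?npd.
rewrite (sum_1_to_widen _ m (p * m)) ?leq_pmull //; last first.
  move=> d /andP[md _]; case: ifP => // _; case: ifP => // /(dvdn_leq m0).
  by rewrite leqNgt md.
rewrite -sum_1_to_add (sum_1_to_ext _ (fun _ => 0)) ?sum_1_to_zero // => k _.
by case: ifP; case: ifP; lra.
Qed.

Lemma sqr_dvdn_leq d m : (0 < m)%N -> d * d %| m -> (d <= m)%N.
Proof. by move=> m0 /(dvdn_leq m0); case: d => // d; apply/leq_trans/leq_pmulr. Qed.

Lemma sum_sqr_divisors_prime_mul p m f : prime p -> (0 < m)%N ->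
  sum_1_to (fun d => if d * d %| p * m then f d else 0) (p * m) =
  sum_1_to (fun k => if p * (k * k) %| m then f (p * k)%N else 0) m +
  sum_1_to (fun d => if ~~ (p %| d) && (d * d %| m) then f d else 0) m.
Proof.
move=> pp m0; have p0 := prime_gt0 pp.
rewrite (sum_1_to_split_multiples p) // mulKn //; congr (_ + _).
  by apply: sum_1_to_ext => k _; rewrite -mulnA dvdn_pmul2l // mulnCA.
rewrite (sum_1_to_ext _ (fun d => if ~~ (p %| d) && (d * d %| m) then f d else 0)).
  rewrite (sum_1_to_widen _ m) ?leq_pmull // => d /andP[md _].
  by case: ifP => // /andP[_ /(sqr_dvdn_leq _ _ m0)]; rewrite leqNgt md.
move=> d _; case: (boolP (p %| d)) => //= npd.
by rewrite Gauss_dvdr // coprimeMl coprime_sym prime_coprime ?npd.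
Qed.

Lemma sum_mu_sqr_divisors n : (0 < n)%N ->
  sum_1_to (fun d => if d * d %| n then mu d else 0) n = mu n ^ 2.
Proof.
elim/ltn_ind: n => n IH n0.
case: (ltngtP n 1) => [|n1|->]; [by rewrite ltnNge n0 | | by rewrite /= mu1; lra].
have pp := pdiv_prime n1; have p0 := prime_gt0 pp.
case/dvdnP: (pdiv_dvd n) IH n0 n1 => m ->; move: (pdiv n) pp p0 => p pp p0 IH mp0 _.
have m0 : (0 < m)%N by move: mp0; rewrite muln_gt0 => /andP[].
rewrite mulnC sum_sqr_divisors_prime_mul // mu_prime_mul //.
case: (boolP (p %| m)) => [/dvdnP[m' mE] | npm].
- rewrite -sum_1_to_add (sum_1_to_ext _ (fun _ => 0)) ?sum_1_to_zero => [|k /andP[k0 _]].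
    by rewrite /= Rmult_0_l.
  rewrite mE (mulnC m') dvdn_pmul2l // mu_prime_mul //.
  case: (boolP (p %| k)) => [_ | npk] /=; first by case: ifP; lra.
  rewrite Gauss_dvdr; last by rewrite coprimeMl coprime_sym prime_coprime ?npk.
  by case: ifP; lra.
- rewrite (sum_1_to_ext _ (fun _ => 0)) ?sum_1_to_zero => [|k _]; last first.
    by case: ifP => // /(dvdn_trans (dvdn_mulr _ (dvdnn p))); rewrite (negbTE npm).
  rewrite (sum_1_to_ext _ (fun d => if d * d %| m then mu d else 0)) => [|d _].
    by rewrite IH ?ltn_Pmulr ?prime_gt1 //; lra.
  case: (boolP (p %| d)) => //= pd; case: ifP => // /(dvdn_trans (dvdn_mulr d pd)).
  by rewrite (negbTE npm).
Qed.

Lemma INR_gt0 n : (0 < n)%N -> 0 < INR n.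
Proof. by move=> n0; apply: lt_0_INR; apply/ltP. Qed.

Lemma INR_ge1 n : (0 < n)%N -> 1 <= INR n.
Proof. by move=> n0; apply: (le_INR 1); apply/leP. Qed.

Lemma INR_muln m n : INR (m * n)%N = INR m * INR n.
Proof. exact: mult_INR. Qed.

Lemma ln_le_sub1 x : 0 < x -> ln x <= x - 1.
Proof. by move=> x0; have := exp_ineq1_le (ln x); rewrite exp_ln //; lra. Qed.

Lemma ln_ge0 x : 1 <= x -> 0 <= ln x.
Proof. by move=> x1; rewrite -ln_1; apply: ln_le; lra. Qed.

Lemma ln_le_2sqrt x : 0 < x -> ln x <= 2 * sqrt x.
Proof.
move=> x0; have s0 : 0 < sqrt x by apply: sqrt_lt_R0.
rewrite -{1}(sqrt_sqrt x) ?ln_mult //; last lra.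
by have := ln_le_sub1 _ s0; lra.
Qed.

Lemma ln_succ_sub_le n : (0 < n)%N -> ln (INR n.+1) - ln (INR n) <= / INR n.
Proof.
move=> n0; have n_gt0 := INR_gt0 _ n0; rewrite S_INR -ln_div; try lra.
have -> : / INR n = (INR n + 1) / INR n - 1 by field; lra.
by apply: ln_le_sub1; apply: Rdiv_lt_0_compat; lra.
Qed.

Lemma ln_succ_sub_ge n : (0 < n)%N -> / INR n.+1 <= ln (INR n.+1) - ln (INR n).
Proof.
move=> n0; have n_gt0 := INR_gt0 _ n0; rewrite S_INR.
have q0 : 0 < INR n / (INR n + 1) by apply: Rdiv_lt_0_compat; lra.
have := ln_le_sub1 _ q0; rewrite ln_div; try lra.
have -> : INR n / (INR n + 1) - 1 = - / (INR n + 1) by field; lra.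
lra.
Qed.

Lemma Un_cv_lb u l c N : Un_cv u l -> (forall m, (N <= m)%N -> c <= u m) -> c <= l.
Proof.
move=> cv lb; apply: Rnot_lt_le => lc; have [M HM] := cv (c - l) ltac:(lra).
have /lb := leq_maxr M N; have /leP/HM := leq_maxl M N.
by rewrite /R_dist /Rdist => /Rabs_def2[]; lra.
Qed.

Lemma Un_cv_ub u l c N : Un_cv u l -> (forall m, (N <= m)%N -> u m <= c) -> l <= c.
Proof.
move=> cv ub; suff : - c <= - l by lra.
apply: (Un_cv_lb (opp_seq u) _ _ N) => [|m /ub]; last by rewrite /opp_seq; lra.
by apply: CV_opp.
Qed.

Lemma Un_cv_dist_le u l c r N : Un_cv u l ->
  (forall m, (N <= m)%N -> Rabs (u m - c) <= r) -> Rabs (l - c) <= r.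
Proof.
move=> cv near; apply/Rabs_le_between'; split.
- by apply: (Un_cv_lb _ _ _ N cv) => m /near /Rabs_le_between'[].
- by apply: (Un_cv_ub _ _ _ N cv) => m /near /Rabs_le_between'[].
Qed.

Lemma eq0_of_mul_ln_bounded x C :
  (forall K, (0 < K)%N -> Rabs (x * ln (INR K)) <= C) -> x = 0.
Proof.
move=> bound; apply: Rabs_eq_0; apply: Rle_antisym (Rabs_pos x); apply: Rnot_lt_le => x0.
have C0 : 0 <= C by have := bound 1%N isT; have := Rabs_pos (x * ln (INR 1)); lra.
have [K HK] := INR_unbounded (exp (C / Rabs x)).
have K_gt0 : 0 < INR K by have := exp_pos (C / Rabs x); lra.
have K0 : (0 < K)%N by apply/ltP/INR_lt.
have lnK : C / Rabs x < ln (INR K).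
  by rewrite -(ln_exp (C / Rabs x)); apply: ln_increasing; [apply: exp_pos | lra].
have := bound K K0; rewrite Rabs_mult (Rabs_pos_eq (ln _)); last first.
  by apply/Rlt_le/Rle_lt_trans/lnK/Rdiv_le_0_compat.
have : C = Rabs x * (C / Rabs x) by field; lra.
by nra.
Qed.

Definition harmonic (N : nat) : R := sum_1_to (fun n => / INR n) N.

Lemma harmonicS N : harmonic N.+1 = harmonic N + / INR N.+1.
Proof. by []. Qed.

Lemma ln_succ_le_harmonic N : ln (INR N.+1) <= harmonic N.
Proof.
elim: N => [|N IH]; first by rewrite /= ln_1 /harmonic /=; lra.
by rewrite harmonicS; have := ln_succ_sub_le N.+1 isT; lra.
Qed.

Lemma harmonic_sub_ln_decreasing :
  Un_decreasing (fun n => harmonic n.+1 - ln (INR n.+1)).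
Proof. by move=> n; rewrite harmonicS; have := ln_succ_sub_ge n.+1 isT; lra. Qed.

Lemma harmonic_sub_ln_cv : Un_cv (fun N => harmonic N - ln (INR N)) euler_gamma.
Proof.
have lb0 : has_lb (fun n => harmonic n.+1 - ln (INR n.+1)).
  exists 0 => _ [n ->]; rewrite /opp_seq.
  have := ln_succ_le_harmonic n.+1; have := ln_le (INR n.+1) (INR n.+2).
  by rewrite (S_INR n.+1); have := INR_gt0 n.+1 isT; lra.
have [l cvl] := decreasing_cv _ harmonic_sub_ln_decreasing lb0.
have {}cvl : Un_cv (fun N => harmonic N - ln (INR N)) l.
  move=> eps /cvl[N HN]; exists N.+1 => -[|n] Nn; [lia | apply: HN; lia].
have := epsilon_spec (inhabits 0) _ (ex_intro _ l cvl); rewrite -/euler_gamma.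
by move/UL_sequence => /(_ _ cvl) ->.
Qed.

Lemma euler_gamma_le_harmonic_sub_ln n : (0 < n)%N ->
  euler_gamma <= harmonic n - ln (INR n).
Proof.
case: n => // n _; apply: (decreasing_ineq (fun n => harmonic n.+1 - ln (INR n.+1))).
  exact: harmonic_sub_ln_decreasing.
move=> eps /harmonic_sub_ln_cv[N HN]; exists N => k Nk; apply: HN; lia.
Qed.

Lemma harmonic_sub_ln_succ_le_euler_gamma n :
  harmonic n - ln (INR n.+1) <= euler_gamma.
Proof.
have incr : Un_decreasing (fun k => ln (INR k.+1) - harmonic k).
  by move=> k; rewrite harmonicS; have := ln_succ_sub_le k.+1 isT; lra.
apply: (Un_cv_lb _ _ _ n.+1 harmonic_sub_ln_cv) => m nm.
have m0 : (0 < m)%N by apply: leq_trans nm.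
have := decreasing_prop _ n m incr (leP (ltnW nm)).
have : ln (INR m) <= ln (INR m.+1) by apply: ln_le; [exact: INR_gt0 | rewrite S_INR; lra].
lra.
Qed.

Lemma harmonic_sub_ln_approx k y : (0 < k)%N -> INR k <= y -> y < INR k + 1 ->
  Rabs (harmonic k - ln y - euler_gamma) <= / INR k.
Proof.
move=> k0 ky yk; have k_gt0 := INR_gt0 _ k0.
have := ln_le _ _ k_gt0 ky; have : ln y <= ln (INR k.+1) by apply: ln_le; rewrite ?S_INR; lra.
have := ln_succ_sub_le k k0; have := euler_gamma_le_harmonic_sub_ln k k0.
have := harmonic_sub_ln_succ_le_euler_gamma k.
by move=> *; apply: Rabs_le; lra.
Qed.

(** * Series with a telescopic majorant *)

Definition vanishes (t : nat -> R) : Prop :=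
  forall eps, 0 < eps -> exists N, forall n, (N <= n)%N -> t n < eps.

Lemma vanishes_scal c t : 0 <= c -> vanishes t -> vanishes (fun n => c * t n).
Proof.
case/Rle_lt_or_eq_dec => [c0 vt eps e0 | <- _ eps e0]; last by exists 0%N => n _; lra.
have [N HN] := vt (eps / c) (Rdiv_lt_0_compat _ _ e0 c0).
exists N => n /HN; rewrite /Rdiv => small.
by rewrite -(Rinv_r_simpl_m c eps); [nra | lra].
Qed.

Lemma vanishes_add t u : vanishes t -> vanishes u -> vanishes (fun n => t n + u n).
Proof.
move=> vt vu eps e0; have [N1 HN1] := vt (eps / 2) ltac:(lra).
have [N2 HN2] := vu (eps / 2) ltac:(lra); exists (maxn N1 N2) => n.
by rewrite geq_max => /andP[/HN1 ? /HN2 ?]; lra.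
Qed.

Lemma eq0_of_vanishing_bound x t : vanishes t ->
  (forall K, (0 < K)%N -> Rabs x <= t K) -> x = 0.
Proof.
move=> vt bound; apply: Rabs_eq_0; apply: Rle_antisym (Rabs_pos x).
apply: Rnot_lt_le => /vt[N HN].
by have := HN (maxn N 1) (leq_maxl _ _); have := bound (maxn N 1) (leq_maxr _ _); lra.
Qed.

Lemma Rle_of_le_add_vanishing x y t N : vanishes t ->
  (forall K, (N <= K)%N -> x <= y + t K) -> x <= y.
Proof.
move=> vt le_add; apply: Rnot_lt_le => yx; have [M HM] := vt (x - y) ltac:(lra).
by have := HM (maxn M N) (leq_maxl _ _); have := le_add (maxn M N) (leq_maxr _ _); lra.
Qed.

Section TelescopicMajorant.

Variables a t : nat -> R.
Hypothesis t_ge0 : forall n, 0 <= t n.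
Hypothesis a_le_t_step : forall n, (0 < n)%N -> Rabs (a n.+1) <= t n - t n.+1.

Lemma sum_abs_addn_le K j : (0 < K)%N ->
  sum_1_to (fun n => Rabs (a n)) (K + j) - sum_1_to (fun n => Rabs (a n)) K
  <= t K - t (K + j).
Proof.
move=> K0; elim: j => [|j IH]; first by rewrite addn0; lra.
by rewrite addnS /=; have := a_le_t_step (K + j) (ltn_addr j K0); lra.
Qed.

Lemma majorant_antitone K M : (0 < K)%N -> (K <= M)%N -> t M <= t K.
Proof.
move=> K0 /subnKC <-; have := sum_abs_addn_le K (M - K) K0.
rewrite sum_1_to_addn; suff : 0 <= sum_1_to (fun k => Rabs (a (K + k)%N)) (M - K) by lra.
by rewrite -(sum_1_to_zero (M - K)); apply: sum_1_to_le => k _; apply: Rabs_pos.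
Qed.

Lemma sum_1_to_tail_le K M N : (0 < K)%N -> (K <= M)%N -> (M <= N)%N ->
  Rabs (sum_1_to a N - sum_1_to a M) <= t K.
Proof.
move=> K0 KM /subnKC <-; rewrite sum_1_to_addn.
have -> : forall x y, x + y - x = y by move=> x y; ring.
apply: Rle_trans (Rabs_sum_1_to_le _ _) _.
have := sum_abs_addn_le M (N - M) (leq_trans K0 KM); rewrite sum_1_to_addn.
by have := majorant_antitone K M K0 KM; have := t_ge0 (M + (N - M)); lra.
Qed.

Lemma sum_abs_le N : sum_1_to (fun n => Rabs (a n)) N <= Rabs (a 1%N) + t 1%N.
Proof.
case: N => [|N] /=; first by have := Rabs_pos (a 1%N); have := t_ge0 1; lra.
by have := sum_abs_addn_le 1 N isT; rewrite add1n /=; have := t_ge0 N.+1; lra.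
Qed.

Hypothesis t_vanishes : vanishes t.

Lemma telescopic_series : {l | Un_cv (sum_1_to a) l /\
  forall K, (0 < K)%N -> Rabs (l - sum_1_to a K) <= t K}.
Proof.
have [l cvl] : {l | Un_cv (sum_1_to a) l}.
  apply: Rcomplete.R_complete => eps e0; have [N HN] := t_vanishes (eps / 2) ltac:(lra).
  set K := maxn N 1; have K0 : (0 < K)%N by rewrite leq_max orbT.
  exists K => n m /leP Kn /leP Km; rewrite /R_dist.
  have := sum_1_to_tail_le _ _ _ K0 (leqnn _) Kn.
  have := sum_1_to_tail_le _ _ _ K0 (leqnn _) Km.
  have := HN K (leq_maxl N 1); move: (sum_1_to a n) (sum_1_to a m) => x y.
  by move=> ? /Rabs_le_between'[? ?] /Rabs_le_between'[? ?]; apply: Rabs_def1; lra.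
exists l; split => // K K0; apply: (Un_cv_dist_le _ _ _ _ K cvl) => m Km.
by apply: (sum_1_to_tail_le K K m K0 (leqnn K) Km).
Qed.

End TelescopicMajorant.

Definition inv_nat (n : nat) : R := / INR n.
Definition inv_sqrt_nat (n : nat) : R := / sqrt (INR n).

Lemma inv_nat_ge0 n : 0 <= inv_nat n.
Proof.
case: n => [|n]; rewrite /inv_nat ?Rinv_0; first lra.
by apply/Rlt_le/Rinv_0_lt_compat/INR_gt0.
Qed.

Lemma inv_sqrt_nat_ge0 n : 0 <= inv_sqrt_nat n.
Proof. by rewrite /inv_sqrt_nat -sqrt_inv; apply: sqrt_pos. Qed.

Lemma vanishes_inv_nat : vanishes inv_nat.
Proof.
move=> eps e0; have [N HN] := INR_unbounded (/ eps); exists N.+1 => n Nn.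
have n0 : (0 < n)%N by apply: leq_trans Nn.
have : INR N < INR n by apply: lt_INR; apply/ltP.
rewrite /inv_nat -(Rinv_inv eps) => ?; apply: Rinv_lt_contravar; last lra.
by apply: Rmult_lt_0_compat; [apply: Rinv_0_lt_compat | apply: INR_gt0].
Qed.

Lemma vanishes_inv_sqrt_nat : vanishes inv_sqrt_nat.
Proof.
move=> eps e0; have [N HN] := vanishes_inv_nat (eps * eps) ltac:(nra).
exists N => n /HN small; rewrite /inv_sqrt_nat -sqrt_inv -(sqrt_square eps); last lra.
by apply: sqrt_lt_1_alt; split; [apply: inv_nat_ge0 | exact: small].
Qed.

Lemma inv_sqr_le_inv_nat_step n : (0 < n)%N ->
  / (INR n.+1 * INR n.+1) <= inv_nat n - inv_nat n.+1.
Proof.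
move=> n0; have := INR_gt0 _ n0; rewrite /inv_nat S_INR => n_gt0.
have -> : / INR n - / (INR n + 1) = / (INR n * (INR n + 1)) by field; lra.
by apply: Rinv_le_contravar; nra.
Qed.

Lemma inv_pow32_le_inv_sqrt_nat_step n : (0 < n)%N ->
  / (INR n.+1 * sqrt (INR n.+1)) <= 2 * (inv_sqrt_nat n - inv_sqrt_nat n.+1).
Proof.
move=> n0; have := INR_gt0 _ n0; rewrite /inv_sqrt_nat => n_gt0.
have x0 : 0 < sqrt (INR n) by apply: sqrt_lt_R0.
have y0 : 0 < sqrt (INR n.+1) by apply: sqrt_lt_R0; rewrite S_INR; lra.
have xx := sqrt_sqrt (INR n) ltac:(lra).
have yy := sqrt_sqrt (INR n.+1) ltac:(rewrite S_INR; lra).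
move: (sqrt (INR n)) (sqrt (INR n.+1)) x0 y0 xx yy => x y x0 y0 xx.
rewrite S_INR -xx => yy; rewrite -yy.
(* y - x = 1/(x + y) *)
have xy : x < y by nra.
have key : x <= 2 * (y * y) * (y - x).
  have e : (y - x) * (x + y) = 1 by nra.
  have : 0 <= (y - x) * (2 * (y * y) - x * x - x * y) by apply: Rmult_le_pos; nra.
  nra.
have -> : 2 * (/ x - / y) = 2 * (y - x) * / (x * y) by field; lra.
have -> : / (y * y * y) = x * / (x * (y * y * y)) by field; lra.
apply: Rle_trans (_ : 2 * (y * y) * (y - x) * / (x * (y * y * y)) <= _).
  by apply: Rmult_le_compat_r => //; apply/Rlt_le/Rinv_0_lt_compat; nra.
by right; field; lra.
Qed.

Lemma ln_div_sqr_le n : (0 < n)%N ->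
  ln (INR n) / (INR n * INR n) <= 2 / (INR n * sqrt (INR n)).
Proof.
move=> n0; have n_gt0 := INR_gt0 _ n0.
have s0 : 0 < sqrt (INR n) by apply: sqrt_lt_R0.
have ss := sqrt_sqrt (INR n) ltac:(lra).
have -> : 2 / (INR n * sqrt (INR n)) =
          2 * sqrt (INR n) / (INR n * (sqrt (INR n) * sqrt (INR n))) by field; lra.
rewrite ss.
by apply: Rmult_le_compat_r; [apply/Rlt_le/Rinv_0_lt_compat; nra | apply: ln_le_2sqrt].
Qed.

Lemma four_inv_sqrt_ge0 n : 0 <= 4 * inv_sqrt_nat n.
Proof. by have := inv_sqrt_nat_ge0 n; lra. Qed.

Lemma vanishes_four_inv_sqrt : vanishes (fun n => 4 * inv_sqrt_nat n).
Proof. by apply: vanishes_scal vanishes_inv_sqrt_nat; lra. Qed.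

Definition coef_one (n : nat) : R := / (INR n * INR n).
Definition coef_ln (n : nat) : R := ln (INR n) / (INR n * INR n).
Definition coef_mu (n : nat) : R := mu n * coef_one n.
Definition coef_mu_ln (n : nat) : R := mu n * coef_ln n.

Lemma Rabs_mu_mul_le n x : Rabs (mu n * x) <= Rabs x.
Proof.
rewrite Rabs_mult; have := Rabs_mu_le1 n; have := Rabs_pos x; have := Rabs_pos (mu n).
by nra.
Qed.

Lemma coef_one_step n : (0 < n)%N -> Rabs (coef_one n.+1) <= inv_nat n - inv_nat n.+1.
Proof.
move=> n0; rewrite Rabs_pos_eq; first exact: inv_sqr_le_inv_nat_step.
by apply/Rlt_le/Rinv_0_lt_compat; have := INR_gt0 n.+1 isT; nra.
Qed.

Lemma coef_ln_step n : (0 < n)%N ->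
  Rabs (coef_ln n.+1) <= 4 * inv_sqrt_nat n - 4 * inv_sqrt_nat n.+1.
Proof.
move=> n0; have := inv_pow32_le_inv_sqrt_nat_step n n0; have := ln_div_sqr_le n.+1 isT.
have := ln_ge0 _ (INR_ge1 n.+1 isT); have := INR_gt0 n.+1 isT.
rewrite /coef_ln /Rdiv => *; rewrite Rabs_pos_eq; first lra.
by apply: Rmult_le_pos => //; apply/Rlt_le/Rinv_0_lt_compat; nra.
Qed.

Lemma coef_mu_step n : (0 < n)%N -> Rabs (coef_mu n.+1) <= inv_nat n - inv_nat n.+1.
Proof. by move=> n0; apply: Rle_trans (Rabs_mu_mul_le _ _) (coef_one_step n n0). Qed.

Lemma coef_mu_ln_step n : (0 < n)%N ->
  Rabs (coef_mu_ln n.+1) <= 4 * inv_sqrt_nat n - 4 * inv_sqrt_nat n.+1.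
Proof. by move=> n0; apply: Rle_trans (Rabs_mu_mul_le _ _) (coef_ln_step n n0). Qed.

(* [series_one], [series_ln], [series_mu], [series_mu_ln] are zeta(2), -zeta'(2),
   1/zeta(2) and zeta'(2)/zeta(2)^2; this is established below. *)
Definition series_one : R := proj1_sig
  (telescopic_series _ _ inv_nat_ge0 coef_one_step vanishes_inv_nat).
Definition series_ln : R := proj1_sig
  (telescopic_series _ _ four_inv_sqrt_ge0 coef_ln_step vanishes_four_inv_sqrt).
Definition series_mu : R := proj1_sig
  (telescopic_series _ _ inv_nat_ge0 coef_mu_step vanishes_inv_nat).
Definition series_mu_ln : R := proj1_sig
  (telescopic_series _ _ four_inv_sqrt_ge0 coef_mu_ln_step vanishes_four_inv_sqrt).

Lemma series_one_spec : Un_cv (sum_1_to coef_one) series_one /\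
  forall K, (0 < K)%N -> Rabs (series_one - sum_1_to coef_one K) <= inv_nat K.
Proof. exact: proj2_sig (telescopic_series _ _ _ _ _). Qed.

Lemma series_ln_spec : Un_cv (sum_1_to coef_ln) series_ln /\
  forall K, (0 < K)%N -> Rabs (series_ln - sum_1_to coef_ln K) <= 4 * inv_sqrt_nat K.
Proof. exact: proj2_sig (telescopic_series _ _ _ _ _). Qed.

Lemma series_mu_spec : Un_cv (sum_1_to coef_mu) series_mu /\
  forall K, (0 < K)%N -> Rabs (series_mu - sum_1_to coef_mu K) <= inv_nat K.
Proof. exact: proj2_sig (telescopic_series _ _ _ _ _). Qed.

Lemma series_mu_ln_spec : Un_cv (sum_1_to coef_mu_ln) series_mu_ln /\
  forall K, (0 < K)%N -> Rabs (series_mu_ln - sum_1_to coef_mu_ln K) <= 4 * inv_sqrt_nat K.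
Proof. exact: proj2_sig (telescopic_series _ _ _ _ _). Qed.

(** * Dirichlet convolution *)

Definition dconv (a b : nat -> R) (n : nat) : R :=
  sum_1_to (fun d => if d %| n then a d * b (n %/ d) else 0) n.

Lemma sum_dconv a b N :
  sum_1_to (dconv a b) N = sum_1_to (fun d => a d * sum_1_to b (N %/ d)) N.
Proof.
rewrite (sum_1_to_ext _ (fun n => sum_1_to (fun d => if d %| n then a d * b (n %/ d) else 0) N)).
  rewrite sum_1_to_exchange; apply: sum_1_to_ext => d /andP[d0 _].
  rewrite sum_1_to_multiples // -sum_1_to_scal.
  by apply: sum_1_to_ext => k _; rewrite mulKn.
move=> n /andP[n0 nN]; symmetry; apply: sum_1_to_widen => // d /andP[nd _].
by case: ifP => // /(dvdn_leq n0); rewrite leqNgt nd.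
Qed.

(* Hyperbola method at N = K^2: for d <= K the inner sums of b run beyond K, and the
   terms with d > K are controlled by the tail of a. *)
Section DirichletProduct.

Variables (a b ta tb : nat -> R) (A B : R).
Hypothesis ta_ge0 : forall n, 0 <= ta n.
Hypothesis tb_ge0 : forall n, 0 <= tb n.
Hypothesis a_step : forall n, (0 < n)%N -> Rabs (a n.+1) <= ta n - ta n.+1.
Hypothesis b_step : forall n, (0 < n)%N -> Rabs (b n.+1) <= tb n - tb n.+1.
Hypothesis A_tail : forall K, (0 < K)%N -> Rabs (A - sum_1_to a K) <= ta K.
Hypothesis B_tail : forall K, (0 < K)%N -> Rabs (B - sum_1_to b K) <= tb K.

Let Ta := Rabs (a 1%N) + ta 1%N.
Let Tb := Rabs (b 1%N) + tb 1%N.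

Lemma Rabs_sum_b_le X : Rabs (sum_1_to b X) <= Tb.
Proof. exact: Rle_trans (Rabs_sum_1_to_le _ _) (sum_abs_le _ _ tb_ge0 b_step X). Qed.

Lemma partial_sums_mul_approx K : (0 < K)%N ->
  Rabs (A * B - sum_1_to a (K * K) * sum_1_to b (K * K)) <= Rabs A * tb K + Tb * ta K.
Proof.
move=> K0; have KK0 : (0 < K * K)%N by rewrite muln_gt0 K0.
have KKK : (K <= K * K)%N by rewrite leq_pmulr.
have -> : A * B - sum_1_to a (K * K) * sum_1_to b (K * K) =
          A * (B - sum_1_to b (K * K)) + sum_1_to b (K * K) * (A - sum_1_to a (K * K)) by ring.
apply: Rle_trans (Rabs_triang _ _) _; rewrite !Rabs_mult.
have := majorant_antitone _ _ b_step K _ K0 KKK.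
have := majorant_antitone _ _ a_step K _ K0 KKK.
have := B_tail _ KK0; have := A_tail _ KK0; have := Rabs_sum_b_le (K * K).
have := Rabs_pos A; have := Rabs_pos (A - sum_1_to a (K * K)).
by have := Rabs_pos (B - sum_1_to b (K * K)); have := Rabs_pos (sum_1_to b (K * K)); nra.
Qed.

Lemma dconv_head_le K : (0 < K)%N ->
  Rabs (sum_1_to (fun d => a d * (sum_1_to b (K * K) - sum_1_to b (K * K %/ d))) K)
  <= Ta * tb K.
Proof.
move=> K0; apply: Rle_trans (Rabs_sum_1_to_le _ _) _.
apply: Rle_trans (_ : sum_1_to (fun d => tb K * Rabs (a d)) K <= _).
  apply: sum_1_to_le => d /andP[d0 dK]; rewrite Rabs_mult Rmult_comm.
  apply: Rmult_le_compat_r; first exact: Rabs_pos.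
  apply: (sum_1_to_tail_le _ _ tb_ge0 b_step K) => //; last exact: leq_div.
  by rewrite leq_divRL // leq_mul2l dK orbT.
rewrite sum_1_to_scal; have := sum_abs_le _ _ ta_ge0 a_step K; have := tb_ge0 K.
by rewrite /Ta; nra.
Qed.

Lemma dconv_tail_le K : (0 < K)%N ->
  Rabs (sum_1_to (fun j => a (K + j)%N *
          (sum_1_to b (K * K) - sum_1_to b (K * K %/ (K + j)))) (K * K - K))
  <= 2 * Tb * ta K.
Proof.
move=> K0; apply: Rle_trans (Rabs_sum_1_to_le _ _) _.
have Tb0 : 0 <= Tb by have := Rabs_pos (b 1%N); have := tb_ge0 1; rewrite /Tb; lra.
apply: Rle_trans (_ : sum_1_to (fun j => 2 * Tb * Rabs (a (K + j)%N)) (K * K - K) <= _).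
  apply: sum_1_to_le => j _; rewrite Rabs_mult.
  have : Rabs (sum_1_to b (K * K) - sum_1_to b (K * K %/ (K + j))) <= 2 * Tb.
    apply: Rle_trans (Rabs_triang _ _) _; rewrite Rabs_Ropp.
    by have := Rabs_sum_b_le (K * K); have := Rabs_sum_b_le (K * K %/ (K + j)); lra.
  by have := Rabs_pos (a (K + j)%N); nra.
rewrite sum_1_to_scal; have := sum_abs_addn_le _ _ a_step K (K * K - K) K0.
by rewrite sum_1_to_addn; have := ta_ge0 (K + (K * K - K)); nra.
Qed.

Lemma sum_dconv_approx K : (0 < K)%N ->
  Rabs (A * B - sum_1_to (dconv a b) (K * K)) <= (Rabs A + Ta) * tb K + 3 * Tb * ta K.
Proof.
move=> K0; have KKK : (K <= K * K)%N by rewrite leq_pmulr.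
have split : sum_1_to a (K * K) * sum_1_to b (K * K) - sum_1_to (dconv a b) (K * K) =
  sum_1_to (fun d => a d * (sum_1_to b (K * K) - sum_1_to b (K * K %/ d))) K +
  sum_1_to (fun j => a (K + j)%N *
    (sum_1_to b (K * K) - sum_1_to b (K * K %/ (K + j)))) (K * K - K).
  rewrite -(sum_1_to_addn (fun d => a d * (sum_1_to b (K * K) - sum_1_to b (K * K %/ d)))).
  rewrite subnKC // sum_dconv (Rmult_comm (sum_1_to a _)) -sum_1_to_scal -sum_1_to_sub.
  by apply: sum_1_to_ext => d _; ring.
have := partial_sums_mul_approx K K0; have := dconv_head_le K K0; have := dconv_tail_le K K0.
have := Rabs_triang (A * B - sum_1_to a (K * K) * sum_1_to b (K * K))
  (sum_1_to a (K * K) * sum_1_to b (K * K) - sum_1_to (dconv a b) (K * K)).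
have telescope x y z : x - y + (y - z) = x - z by ring.
rewrite telescope split.
move: (sum_1_to (fun d => _) K) (sum_1_to (fun j => _) (K * K - K)) => h t.
by have := Rabs_triang h t; have := ta_ge0 K; nra.
Qed.

End DirichletProduct.

Lemma sum_dconv_sqr_error_vanishes a b ta tb A B :
  (forall n, 0 <= ta n) -> (forall n, 0 <= tb n) -> vanishes ta -> vanishes tb ->
  (forall n, (0 < n)%N -> Rabs (a n.+1) <= ta n - ta n.+1) ->
  (forall n, (0 < n)%N -> Rabs (b n.+1) <= tb n - tb n.+1) ->
  (forall K, (0 < K)%N -> Rabs (A - sum_1_to a K) <= ta K) ->
  (forall K, (0 < K)%N -> Rabs (B - sum_1_to b K) <= tb K) ->
  exists t, vanishes t /\
    forall K, (0 < K)%N -> Rabs (A * B - sum_1_to (dconv a b) (K * K)) <= t K.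
Proof.
move=> ta0 tb0 vta vtb a_step b_step A_tail B_tail.
eexists; split; last exact: (sum_dconv_approx _ _ _ _ _ _ ta0 tb0 a_step b_step A_tail B_tail).
apply: vanishes_add; apply: vanishes_scal => //.
- by have := Rabs_pos A; have := Rabs_pos (a 1%N); have := ta0 1%N; lra.
- by have := Rabs_pos (b 1%N); have := tb0 1%N; lra.
Qed.

Lemma INR_divn_mul d n : d %| n -> INR (n %/ d) * INR d = INR n.
Proof. by move=> dn; rewrite -INR_muln divnK. Qed.

Lemma dconv_coef_mu_one n : (0 < n)%N ->
  dconv coef_mu coef_one n = if n == 1%N then 1 else 0.
Proof.
move=> n0; rewrite /dconv.
rewrite (sum_1_to_ext _ (fun d => / (INR n * INR n) * (if d %| n then mu d else 0))).
  rewrite sum_1_to_scal sum_mu_divisors //.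
  by case: ifP => [/eqP -> /= | _]; [field | ring].
move=> d /andP[d0 _]; case: ifP => dn; last by ring.
have q0 : (0 < n %/ d)%N by rewrite divn_gt0 // dvdn_leq.
rewrite /coef_mu /coef_one -(INR_divn_mul d n dn).
by have := INR_gt0 _ d0; have := INR_gt0 _ q0; move=> *; field; lra.
Qed.

Lemma dconv_coef_mu_ln n : (0 < n)%N ->
  dconv coef_mu coef_ln n + dconv coef_mu_ln coef_one n = 0.
Proof.
move=> n0; rewrite /dconv -sum_1_to_add.
rewrite (sum_1_to_ext _ (fun d => ln (INR n) / (INR n * INR n) * (if d %| n then mu d else 0))).
  rewrite sum_1_to_scal sum_mu_divisors //.
  by case: ifP => [/eqP -> /= | _]; rewrite ?ln_1; [field | ring].
move=> d /andP[d0 _]; case: ifP => dn; last by ring.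
have q0 : (0 < n %/ d)%N by rewrite divn_gt0 // dvdn_leq.
rewrite /coef_mu_ln /coef_mu /coef_ln /coef_one -(INR_divn_mul d n dn).
have := INR_gt0 _ d0; have := INR_gt0 _ q0; move=> *.
by rewrite ln_mult //; field; lra.
Qed.

Lemma series_mu_mul_one : series_mu * series_one = 1.
Proof.
have [t [vt bound]] := sum_dconv_sqr_error_vanishes _ _ _ _ _ _ inv_nat_ge0 inv_nat_ge0
  vanishes_inv_nat vanishes_inv_nat coef_mu_step coef_one_step
  (proj2 series_mu_spec) (proj2 series_one_spec).
suff : series_mu * series_one - 1 = 0 by lra.
apply: (eq0_of_vanishing_bound _ _ vt) => K K0.
have sum1 : sum_1_to (dconv coef_mu coef_one) (K * K) = 1.
  have : (0 < K * K)%N by rewrite muln_gt0 K0.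
  elim: (K * K)%N => // -[_ _ | N IH _]; first by rewrite /= dconv_coef_mu_one //=; lra.
  by rewrite sum_1_toS IH // dconv_coef_mu_one //=; lra.
by have := bound K K0; rewrite sum1.
Qed.

Lemma series_mu_mul_ln : series_mu * series_ln + series_mu_ln * series_one = 0.
Proof.
have [t1 [vt1 bound1]] := sum_dconv_sqr_error_vanishes _ _ _ _ _ _ inv_nat_ge0 four_inv_sqrt_ge0
  vanishes_inv_nat vanishes_four_inv_sqrt coef_mu_step coef_ln_step
  (proj2 series_mu_spec) (proj2 series_ln_spec).
have [t2 [vt2 bound2]] := sum_dconv_sqr_error_vanishes _ _ _ _ _ _ four_inv_sqrt_ge0 inv_nat_ge0
  vanishes_four_inv_sqrt vanishes_inv_nat coef_mu_ln_step coef_one_step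
  (proj2 series_mu_ln_spec) (proj2 series_one_spec).
apply: (eq0_of_vanishing_bound _ _ (vanishes_add _ _ vt1 vt2)) => K K0.
have sum0 : sum_1_to (dconv coef_mu coef_ln) (K * K) +
            sum_1_to (dconv coef_mu_ln coef_one) (K * K) = 0.
  rewrite -sum_1_to_add (sum_1_to_ext _ (fun _ => 0)) ?sum_1_to_zero // => n /andP[n0 _].
  exact: dconv_coef_mu_ln.
have := bound1 K K0; have := bound2 K K0.
have := Rabs_triang (series_mu * series_ln - sum_1_to (dconv coef_mu coef_ln) (K * K))
  (series_mu_ln * series_one - sum_1_to (dconv coef_mu_ln coef_one) (K * K)).
have -> : series_mu * series_ln - sum_1_to (dconv coef_mu coef_ln) (K * K) +
  (series_mu_ln * series_one - sum_1_to (dconv coef_mu_ln coef_one) (K * K)) =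
  series_mu * series_ln + series_mu_ln * series_one by lra.
lra.
Qed.

(** * [zeta] and [zeta'] at [2] *)

Lemma sum_f_R0_shift f N : sum_f_R0 (fun n => f n.+1) N = sum_1_to f N.+1.
Proof. by elim: N => [|N IH] /=; rewrite ?IH //; lra. Qed.

Lemma Rpower2 x : 0 < x -> Rpower x 2 = x * x.
Proof. by move=> x0; rewrite (_ : 2 = INR 2) ?Rpower_pow //=; ring. Qed.

Lemma zeta2_eq : zeta 2 = series_one.
Proof.
have cv : infinite_sum (fun n => / Rpower (INR n.+1) 2) series_one.
  move=> eps /(proj1 series_one_spec)[N HN]; exists N => n Nn.
  rewrite (PartSum.sum_eq _ (fun n => coef_one n.+1)) ?sum_f_R0_shift.
    by apply: HN; lia.
  by move=> k _; rewrite Rpower2 //; apply: INR_gt0.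
have := epsilon_spec (inhabits 0) _ (ex_intro _ series_one cv); rewrite -/(zeta 2).
by move/uniqueness_sum; apply.
Qed.

Lemma derivable_pt_lim_inv_Rpower a s : 0 < a ->
  derivable_pt_lim (fun s => / Rpower a s) s (- ln a / Rpower a s).
Proof.
move=> a0; apply/is_derive_Reals.
apply: (is_derive_ext (fun s => exp (- (s * ln a)))) => [t|].
  by rewrite /Rpower exp_Ropp.
by auto_derive => //; rewrite /Rpower exp_Ropp; field; apply: Rgt_not_eq; apply: exp_pos.
Qed.

Lemma Rpower_ge_pow32_quarter x s : 1 <= x -> 7/4 <= s ->
  x * sqrt x * Rpower x (/ 4) <= Rpower x s.
Proof.
move=> x1 s74.
have <- : Rpower x (1 + (/ 2 + / 4)) = x * sqrt x * Rpower x (/ 4).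
  by rewrite !Rpower_plus Rpower_1 ?Rpower_sqrt; lra.
by apply: Rle_Rpower; lra.
Qed.

Lemma Rpower_quarter_ge1 x : 1 <= x -> 1 <= Rpower x (/ 4).
Proof. by move=> x1; rewrite -(Rpower_O x); [apply: Rle_Rpower | ]; lra. Qed.

Lemma ln_le_4_Rpower_quarter x : 1 <= x -> ln x <= 4 * Rpower x (/ 4).
Proof.
move=> x1; have := Rpower_quarter_ge1 x x1 => q1.
have -> : ln x = 4 * ln (Rpower x (/ 4)) by rewrite /Rpower ln_exp; field.
by have := ln_le_sub1 _ (Rlt_le_trans _ _ _ Rlt_0_1 q1); lra.
Qed.

Lemma inv_Rpower_le n s : (0 < n)%N -> 7/4 <= s ->
  / Rpower (INR n) s <= / (INR n * sqrt (INR n)).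
Proof.
move=> n0 s74; have n1 := INR_ge1 _ n0; have := sqrt_lt_R0 (INR n) ltac:(lra) => sq0.
have p0 : 0 < INR n * sqrt (INR n) by nra.
apply: Rinv_le_contravar => //; apply: Rle_trans (Rpower_ge_pow32_quarter _ _ n1 s74).
rewrite -{1}(Rmult_1_r (INR n * sqrt (INR n))); apply: Rmult_le_compat_l; first lra.
exact: Rpower_quarter_ge1.
Qed.

Lemma ln_div_Rpower_le n s : (0 < n)%N -> 7/4 <= s ->
  ln (INR n) / Rpower (INR n) s <= 4 / (INR n * sqrt (INR n)).
Proof.
move=> n0 s74; have n1 := INR_ge1 _ n0; have := sqrt_lt_R0 (INR n) ltac:(lra) => sq0.
have q1 := Rpower_quarter_ge1 _ n1; have pw := Rpower_ge_pow32_quarter _ _ n1 s74.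
apply: Rle_trans
  (_ : 4 * Rpower (INR n) (/ 4) / (INR n * sqrt (INR n) * Rpower (INR n) (/ 4)) <= _).
  apply: Rmult_le_compat; [exact: ln_ge0 | | exact: ln_le_4_Rpower_quarter | ].
  - by apply/Rlt_le/Rinv_0_lt_compat/exp_pos.
  - by apply: Rinv_le_contravar => //; apply: Rmult_lt_0_compat; [nra | lra].
by right; field; split; [lra | nra].
Qed.

Lemma vanishes_eight_inv_sqrt : vanishes (fun n => 8 * inv_sqrt_nat n).
Proof. by apply: vanishes_scal vanishes_inv_sqrt_nat; lra. Qed.

Lemma eight_inv_sqrt_ge0 n : 0 <= 8 * inv_sqrt_nat n.
Proof. by have := inv_sqrt_nat_ge0 n; lra. Qed.

Lemma inv_Rpower_step s n : 7/4 <= s -> (0 < n)%N ->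
  Rabs (/ Rpower (INR n.+1) s) <= 8 * inv_sqrt_nat n - 8 * inv_sqrt_nat n.+1.
Proof.
move=> s74 n0; rewrite Rabs_pos_eq; last by apply/Rlt_le/Rinv_0_lt_compat/exp_pos.
have := inv_pow32_le_inv_sqrt_nat_step n n0; have := inv_Rpower_le n.+1 s isT s74.
have : 0 < / (INR n.+1 * sqrt (INR n.+1)).
  by apply/Rinv_0_lt_compat/Rmult_lt_0_compat; [|apply: sqrt_lt_R0]; apply: INR_gt0.
lra.
Qed.

Lemma ln_div_Rpower_step s n : 7/4 <= s -> (0 < n)%N ->
  Rabs (- ln (INR n.+1) / Rpower (INR n.+1) s) <= 8 * inv_sqrt_nat n - 8 * inv_sqrt_nat n.+1.
Proof.
move=> s74 n0; rewrite /Rdiv Ropp_mult_distr_l_reverse Rabs_Ropp Rabs_pos_eq.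
  have := inv_pow32_le_inv_sqrt_nat_step n n0; have := ln_div_Rpower_le n.+1 s isT s74.
  by rewrite /Rdiv; lra.
apply: Rmult_le_pos; first exact: ln_ge0 (INR_ge1 n.+1 isT).
by apply/Rlt_le/Rinv_0_lt_compat/exp_pos.
Qed.

Lemma Un_cv_sum_f_R0_shift a l :
  Un_cv (sum_1_to a) l -> Un_cv (fun N => sum_f_R0 (fun n => a n.+1) N) l.
Proof.
by move=> cv eps /cv[N HN]; exists N => n Nn; rewrite sum_f_R0_shift; apply: HN; lia.
Qed.

Definition zeta_partial (N : nat) (s : R) : R :=
  sum_f_R0 (fun n => / Rpower (INR n.+1) s) N.
Definition zeta'_partial (N : nat) (s : R) : R :=
  sum_f_R0 (fun n => - ln (INR n.+1) / Rpower (INR n.+1) s) N.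
Definition zeta'_series (s : R) : R :=
  epsilon (inhabits 0) (fun l => Un_cv (fun N => zeta'_partial N s) l).

Lemma derivable_pt_lim_zeta_partial N s :
  derivable_pt_lim (zeta_partial N) s (zeta'_partial N s).
Proof.
elim: N => [|N IH]; first exact: derivable_pt_lim_inv_Rpower (INR_gt0 1 isT).
exact: derivable_pt_lim_plus _ _ s _ _ IH
  (derivable_pt_lim_inv_Rpower _ s (INR_gt0 N.+2 isT)).
Qed.

Lemma zeta_partial_cv s : 7/4 <= s -> Un_cv (fun N => zeta_partial N s) (zeta s).
Proof.
move=> s74; have [l [cvl _]] := telescopic_series (fun n => / Rpower (INR n) s) _
  eight_inv_sqrt_ge0 (fun n => inv_Rpower_step s n s74) vanishes_eight_inv_sqrt.
have cv := Un_cv_sum_f_R0_shift _ _ cvl.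
have := epsilon_spec (inhabits 0) _ (ex_intro _ l cv); rewrite -/(zeta s).
by move/UL_sequence => /(_ _ cv) ->.
Qed.

Lemma zeta'_partial_approx s : 7/4 <= s ->
  Un_cv (fun N => zeta'_partial N s) (zeta'_series s) /\
  forall N, Rabs (zeta'_series s - zeta'_partial N s) <= 8 * inv_sqrt_nat N.+1.
Proof.
move=> s74; have [l [cvl tail]] := telescopic_series
  (fun n => - ln (INR n) / Rpower (INR n) s) _
  eight_inv_sqrt_ge0 (fun n => ln_div_Rpower_step s n s74) vanishes_eight_inv_sqrt.
have cv := Un_cv_sum_f_R0_shift _ _ cvl.
have := epsilon_spec (inhabits 0) _ (ex_intro _ l cv); rewrite -/(zeta'_series s).
move/UL_sequence => /(_ _ cv) ->; split => // N.
rewrite /zeta'_partial (sum_f_R0_shift (fun n => - ln (INR n) / Rpower (INR n) s)).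
exact: tail.
Qed.

Lemma derivable_pt_lim_zeta s : 7/4 < s -> derivable_pt_lim zeta s (zeta'_series s).
Proof.
move=> s74; pose r := mkposreal (s - 7/4) ltac:(lra).
have ball_ge y : Boule s r y -> 7/4 <= y.
  by rewrite /Boule /= => /Rabs_def2[]; lra.
apply: (CVU_derivable zeta_partial zeta'_partial zeta zeta'_series s r).
- move=> eps /vanishes_eight_inv_sqrt[N HN]; exists N => n y /leP Nn /ball_ge y74.
  by have := proj2 (zeta'_partial_approx y y74) n; have := HN n.+1 (leqW Nn); lra.
- by move=> y /ball_ge; apply: zeta_partial_cv.
- by move=> n y _; apply: derivable_pt_lim_zeta_partial.
- by rewrite /Boule Rminus_diag Rabs_R0; apply: cond_pos.
Qed.

Lemma zeta'2_eq : zeta'2 = - series_ln.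
Proof.
have d2 := derivable_pt_lim_zeta 2 ltac:(lra).
have := epsilon_spec (inhabits 0) _ (ex_intro _ _ d2); rewrite -/zeta'2.
move/uniqueness_limite => /(_ _ d2) ->.
have cv : Un_cv (fun N => zeta'_partial N 2) (- series_ln).
  apply: (Un_cv_sum_f_R0_shift (fun n => - ln (INR n) / Rpower (INR n) 2)).
  move=> eps /(CV_opp _ _ (proj1 series_ln_spec))[N HN]; exists N => n Nn.
  rewrite (sum_1_to_ext _ (fun k => - coef_ln k)) ?sum_1_to_opp; first exact: HN.
  by move=> k /andP[k0 _]; rewrite /coef_ln Rpower2 /Rdiv; [ring | apply: INR_gt0].
exact: UL_sequence (proj1 (zeta'_partial_approx 2 ltac:(lra))) cv.
Qed.

(** * The sum of [mu(n)^2 / n] at perfect squares *)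

Definition sum_mu2_inv (N : nat) : R := sum_1_to (fun n => mu n ^ 2 / INR n) N.

Lemma sum_mu2_inv_harmonic N :
  sum_mu2_inv N = sum_1_to (fun d => coef_mu d * harmonic (N %/ (d * d))) N.
Proof.
rewrite /sum_mu2_inv (sum_1_to_ext _
  (fun n => sum_1_to (fun d => if d * d %| n then mu d / INR n else 0) N)).
  rewrite sum_1_to_exchange; apply: sum_1_to_ext => d /andP[d0 _].
  rewrite sum_1_to_multiples ?muln_gt0 ?d0 // /coef_mu /harmonic -!sum_1_to_scal.
  apply: sum_1_to_ext => k /andP[k0 _]; rewrite !INR_muln /coef_one.
  by have := INR_gt0 _ d0; have := INR_gt0 _ k0; move=> *; field; lra.
move=> n /andP[n0 nN]; rewrite -sum_mu_sqr_divisors // /Rdiv Rmult_comm -sum_1_to_scal.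
rewrite [RHS](sum_1_to_widen _ n N) // => [|d /andP[nd _]].
  by apply: sum_1_to_ext => d _; case: ifP => _; ring.
by case: ifP => // /(sqr_dvdn_leq _ _ n0); rewrite leqNgt nd.
Qed.

Lemma sum_mu2_inv_sqr K :
  sum_mu2_inv (K * K) = sum_1_to (fun d => coef_mu d * harmonic (K * K %/ (d * d))) K.
Proof.
rewrite sum_mu2_inv_harmonic; apply: sum_1_to_widen => [|d /andP[Kd _]].
  by case: K => // K; rewrite leq_pmulr.
by rewrite divn_small ?ltn_mul // /harmonic /=; ring.
Qed.

Lemma harmonic_div_sqr_approx K d : (0 < d)%N -> (d <= K)%N ->
  Rabs (harmonic (K * K %/ (d * d)) - (2 * ln (INR K) - 2 * ln (INR d)) - euler_gamma)
  <= 2 * (INR d * INR d) / (INR K * INR K).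
Proof.
move=> d0 dK; have K0 : (0 < K)%N by apply: leq_trans dK.
have dd0 : (0 < d * d)%N by rewrite muln_gt0 d0.
have k0 : (0 < K * K %/ (d * d))%N by rewrite divn_gt0 // leq_mul.
have := INR_gt0 _ K0; have := INR_gt0 _ d0; have := INR_ge1 _ k0 => k1 d_gt0 K_gt0.
set k := (K * K %/ (d * d))%N in k0 k1 *.
set y := INR K * INR K / (INR d * INR d).
have [ky yk] : INR k <= y /\ y < INR k + 1.
  have := leq_divM (K * K) (d * d); have := ltn_ceil (K * K) dd0.
  rewrite -/k => /ltP/lt_INR lt /leP/le_INR le; rewrite !INR_muln S_INR in lt le.
  by rewrite /y; split; [apply/Rle_div_r | apply/Rlt_div_l]; nra.
have -> : 2 * ln (INR K) - 2 * ln (INR d) = ln y.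
  by rewrite /y ln_div ?ln_mult; nra.
apply: Rle_trans (harmonic_sub_ln_approx k y k0 ky yk) _.
have -> : 2 * (INR d * INR d) / (INR K * INR K) = 2 / y by rewrite /y; field; lra.
by apply: Rle_trans (_ : / (y / 2) <= _); [apply: Rinv_le_contravar; lra | right; field; lra].
Qed.

Definition mu2_inv_const : R := euler_gamma * series_mu - 2 * series_mu_ln.

Lemma sum_mu2_inv_sqr_decomp K :
  sum_mu2_inv (K * K) =
  (2 * ln (INR K) + euler_gamma) * sum_1_to coef_mu K - 2 * sum_1_to coef_mu_ln K +
  sum_1_to (fun d => coef_mu d * (harmonic (K * K %/ (d * d)) -
                      (2 * ln (INR K) - 2 * ln (INR d)) - euler_gamma)) K.
Proof.
rewrite sum_mu2_inv_sqr -!sum_1_to_scal -sum_1_to_sub -sum_1_to_add.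
by apply: sum_1_to_ext => d _; rewrite /coef_mu_ln /coef_mu /coef_ln /coef_one /Rdiv; ring.
Qed.

Lemma harmonic_error_sum_le K :
  Rabs (sum_1_to (fun d => coef_mu d * (harmonic (K * K %/ (d * d)) -
                   (2 * ln (INR K) - 2 * ln (INR d)) - euler_gamma)) K)
  <= 2 * inv_nat K.
Proof.
case: (posnP K) => [-> | K0]; first by rewrite /= Rabs_R0 /inv_nat /= Rinv_0; lra.
apply: Rle_trans (Rabs_sum_1_to_le _ _) _.
apply: Rle_trans (_ : sum_1_to (fun _ => 2 / (INR K * INR K)) K <= _).
  apply: sum_1_to_le => d /andP[d0 dK]; rewrite Rabs_mult.
  have he := harmonic_div_sqr_approx K d d0 dK; have dd := INR_gt0 _ d0.
  have cm : Rabs (coef_mu d) <= / (INR d * INR d).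
    apply: Rle_trans (Rabs_mu_mul_le _ _) _; rewrite /coef_one Rabs_pos_eq; first exact: Rle_refl.
    by apply/Rlt_le/Rinv_0_lt_compat; nra.
  apply: Rle_trans (_ : / (INR d * INR d) * (2 * (INR d * INR d) / (INR K * INR K)) <= _).
    by apply: Rmult_le_compat => //; apply: Rabs_pos.
  by right; field; have := INR_gt0 _ K0; lra.
by rewrite sum_1_to_const /inv_nat; right; field; have := INR_gt0 _ K0; lra.
Qed.

Lemma ln_mul_inv_nat_le K : (0 < K)%N -> 2 * ln (INR K) * inv_nat K <= 4 * inv_sqrt_nat K.
Proof.
move=> K0; have K_gt0 := INR_gt0 _ K0; have s0 : 0 < sqrt (INR K) by apply: sqrt_lt_R0.
have ss := sqrt_sqrt (INR K) ltac:(lra).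
have -> : 4 * inv_sqrt_nat K = 2 * (2 * sqrt (INR K)) * inv_nat K.
  by rewrite /inv_sqrt_nat /inv_nat -[X in _ = _ * / X]ss; field; lra.
apply: Rmult_le_compat_r; first exact: inv_nat_ge0.
by have := ln_le_2sqrt _ K_gt0; lra.
Qed.

Definition sqr_error (K : nat) : R :=
  12 * inv_sqrt_nat K + (Rabs euler_gamma + 2) * inv_nat K.

Lemma sum_mu2_inv_sqr_approx K : (0 < K)%N ->
  Rabs (sum_mu2_inv (K * K) - series_mu * (2 * ln (INR K)) - mu2_inv_const)
  <= sqr_error K.
Proof.
move=> K0; rewrite sum_mu2_inv_sqr_decomp /mu2_inv_const /sqr_error.
have := harmonic_error_sum_le K; move: (sum_1_to (fun d => _) K) => E hE.
have hM := proj2 series_mu_spec K K0; have hP := proj2 series_mu_ln_spec K K0.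
have hL := ln_mul_inv_nat_le K K0; have lnK := ln_ge0 _ (INR_ge1 _ K0).
move: (sum_1_to coef_mu K) (sum_1_to coef_mu_ln K) hM hP => sM sP hM hP.
have -> : (2 * ln (INR K) + euler_gamma) * sM - 2 * sP + E - series_mu * (2 * ln (INR K)) -
    (euler_gamma * series_mu - 2 * series_mu_ln) =
    - ((2 * ln (INR K) + euler_gamma) * (series_mu - sM)) + 2 * (series_mu_ln - sP) + E by ring.
have hg : Rabs (2 * ln (INR K) + euler_gamma) <= 2 * ln (INR K) + Rabs euler_gamma.
  by apply: Rle_trans (Rabs_triang _ _) _; rewrite Rabs_pos_eq; lra.
have := Rabs_triang (- ((2 * ln (INR K) + euler_gamma) * (series_mu - sM)))
  (2 * (series_mu_ln - sP)).
rewrite Rabs_Ropp !Rabs_mult (Rabs_pos_eq 2); last lra.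
have := Rabs_triang (- ((2 * ln (INR K) + euler_gamma) * (series_mu - sM)) +
  2 * (series_mu_ln - sP)) E.
have := Rabs_pos (series_mu - sM); have := inv_nat_ge0 K; have := Rabs_pos euler_gamma.
nra.
Qed.

Lemma vanishes_sqr_error : vanishes sqr_error.
Proof.
apply: vanishes_add; apply: vanishes_scal; try lra.
- exact: vanishes_inv_sqrt_nat.
- by have := Rabs_pos euler_gamma; lra.
- exact: vanishes_inv_nat.
Qed.

Lemma sqr_error_le K : (0 < K)%N -> sqr_error K <= 14 + Rabs euler_gamma.
Proof.
move=> K0; have K1 := INR_ge1 _ K0.
have : inv_nat K <= 1 by rewrite /inv_nat -Rinv_1; apply: Rinv_le_contravar; lra.
have : inv_sqrt_nat K <= 1.
  rewrite /inv_sqrt_nat -Rinv_1; apply: Rinv_le_contravar; first lra.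
  by rewrite -sqrt_1; apply: sqrt_le_1_alt.
have := inv_nat_ge0 K; have := inv_sqrt_nat_ge0 K; have := Rabs_pos euler_gamma.
by rewrite /sqr_error; nra.
Qed.

Lemma Rabs_sub_le_of_deriv_le f f' g g' a b : a <= b ->
  (forall t, a <= t <= b -> derivable_pt_lim f t (f' t)) ->
  (forall t, a <= t <= b -> derivable_pt_lim g t (g' t)) ->
  (forall t, a < t < b -> Rabs (f' t) <= g' t) ->
  Rabs (f b - f a) <= g b - g a.
Proof.
case/Rle_lt_or_eq_dec => [ab | <-] df dg f'g'; last by rewrite !Rminus_diag Rabs_R0; lra.
have [t1 [E1 t1ab]] := MVT_cor2 (fun t => g t - f t) (fun t => g' t - f' t) a b ab
  (fun t ht => derivable_pt_lim_minus _ _ t _ _ (dg t ht) (df t ht)).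
have [t2 [E2 t2ab]] := MVT_cor2 (fun t => g t + f t) (fun t => g' t + f' t) a b ab
  (fun t ht => derivable_pt_lim_plus _ _ t _ _ (dg t ht) (df t ht)).
move/Rabs_le_between: (f'g' t1 t1ab) => [? ?]; move/Rabs_le_between: (f'g' t2 t2ab) => [? ?].
have : 0 <= (g' t1 - f' t1) * (b - a) by apply: Rmult_le_pos; lra.
have : 0 <= (g' t2 + f' t2) * (b - a) by apply: Rmult_le_pos; lra.
by move=> *; apply: Rabs_le; lra.
Qed.

Lemma nat_floor_eq n t : INR n <= t -> t < INR n + 1 -> nat_floor t = n.
Proof.
move=> nt tn; rewrite /nat_floor -(Int_part_spec t (Z.of_nat n)) ?Nat2Z.id //.
by rewrite -INR_IZR_INZ; lra.
Qed.

Lemma nat_floor_INR n : nat_floor (INR n) = n.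
Proof. by apply: nat_floor_eq; lra. Qed.

Lemma nat_floor_spec t : 0 <= t -> INR (nat_floor t) <= t < INR (nat_floor t) + 1.
Proof.
move=> t0; have [lo hi] := base_Int_part t.
have -> : INR (nat_floor t) = IZR (Int_part t).
  rewrite /nat_floor INR_IZR_INZ Z2Nat.id //.
  have : (-1 < Int_part t)%Z by apply: lt_IZR; lra.
  lia.
lra.
Qed.

Lemma Rabs_sub_le_of_unit_pieces F G :
  (forall n a b, (0 < n)%N -> INR n <= a -> a <= b -> b <= INR n + 1 ->
     Rabs (F b - F a) <= G b - G a) ->
  forall a b, 1 <= a -> a <= b -> Rabs (F b - F a) <= G b - G a.
Proof.
move=> piece a b a1 ab; have [_ bn] := nat_floor_spec b ltac:(lra).
move: (nat_floor b) (Rlt_le _ _ bn) => k {bn}; elim: k a b a1 ab => [|k IH] a b a1 ab bk.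
  by move: bk => /= bk; apply: (piece 1%N) => //=; lra.
case: (Rle_lt_dec b (INR k + 1)) => [|kb]; first exact: IH.
have k1 : INR k.+1 = INR k + 1 by rewrite S_INR.
case: (Rle_lt_dec (INR k + 1) a) => [ka | ak].
  by apply: (piece k.+1) => //; lra.
have := IH a (INR k + 1) a1 (Rlt_le _ _ ak) (Rle_refl _).
have := piece k.+1 (INR k + 1) b isT ltac:(lra) ltac:(lra) ltac:(lra).
have := Rabs_triang (F b - F (INR k + 1)) (F (INR k + 1) - F a).
by rewrite (_ : F b - F (INR k + 1) + (F (INR k + 1) - F a) = F b - F a); [lra | ring].
Qed.

(** * Partial summation *)

Definition count_mu2 (N : nat) : R := sum_1_to (fun n => mu n ^ 2) N.

Lemma sum_le_on_unit_step f n t : INR n <= t -> t < INR n + 1 -> sum_le f t = sum_1_to f n.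
Proof. by move=> nt tn; rewrite /sum_le (nat_floor_eq n t). Qed.

Lemma derivable_pt_lim_inv_sqrt C t : 0 < t ->
  derivable_pt_lim (fun t => - (2 * C) / sqrt t) t (C / (t * sqrt t)).
Proof.
move=> t0; have s0 := sqrt_lt_R0 t t0; have ss := sqrt_sqrt t (Rlt_le _ _ t0).
apply/is_derive_Reals; auto_derive; first by repeat split; lra.
by rewrite -[X in _ = _ / (X * _)]ss; field; lra.
Qed.

Section SquarefreeCount.

Variables c B : R.
Hypothesis count_approx : forall z, 1 <= z ->
  Rabs (sum_le (fun n => mu n ^ 2) z - c * z) <= B * sqrt z.

Lemma count_bound_ge0 : 0 <= B.
Proof.
have := count_approx 1 (Rle_refl 1); rewrite sqrt_1.
by have := Rabs_pos (sum_le (fun n => mu n ^ 2) 1 - c * 1); lra.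
Qed.

(* Smooth on each [n, n+1], with derivative (Q(n) - c t)/t^2, and continuous at the
   integers. *)
Definition abel_rest (t : R) : R :=
  sum_le (fun n => mu n ^ 2 / INR n) t - sum_le (fun n => mu n ^ 2) t / t - c * ln t.

Definition abel_rest_on (n : nat) (t : R) : R :=
  sum_mu2_inv n - count_mu2 n / t - c * ln t.

Lemma abel_rest_on_unit_step n t : (0 < n)%N -> INR n <= t <= INR n + 1 ->
  abel_rest t = abel_rest_on n t.
Proof.
move=> n0 [nt]; case/Rle_lt_or_eq_dec => [tn | ->].
  by rewrite /abel_rest !(sum_le_on_unit_step _ n t).
rewrite -S_INR /abel_rest /abel_rest_on !(sum_le_on_unit_step _ n.+1); try (rewrite S_INR; lra).
rewrite /sum_mu2_inv /count_mu2 !sum_1_toS; field.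
by have := INR_gt0 n.+1 isT; lra.
Qed.

Lemma derivable_pt_lim_abel_rest_on n t : 0 < t ->
  derivable_pt_lim (abel_rest_on n) t (count_mu2 n / (t * t) - c / t).
Proof.
move=> t0; apply/is_derive_Reals; rewrite /abel_rest_on.
by auto_derive; [repeat split; lra | field; lra].
Qed.

Lemma abel_rest_on_deriv_le n t : (0 < n)%N -> INR n < t < INR n + 1 ->
  Rabs (count_mu2 n / (t * t) - c / t) <= B / (t * sqrt t).
Proof.
move=> n0 [nt tn]; have n1 := INR_ge1 _ n0; have t0 : 0 < t by lra.
have := count_approx t ltac:(lra); rewrite (sum_le_on_unit_step _ n t) //; try lra.
have s0 := sqrt_lt_R0 t t0; have ss := sqrt_sqrt t (Rlt_le _ _ t0).
have -> : count_mu2 n / (t * t) - c / t = (count_mu2 n - c * t) * / (t * t) by field; lra.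
have -> : B / (t * sqrt t) = B * sqrt t * / (t * t).
  have e u : 0 < u -> B / (u * u * u) = B * u * / (u * u * (u * u)) by move=> ?; field; lra.
  by move: (e _ s0); rewrite ss.
rewrite Rabs_mult (Rabs_pos_eq (/ _)); last by apply/Rlt_le/Rinv_0_lt_compat; nra.
by move=> ?; apply: Rmult_le_compat_r => //; apply/Rlt_le/Rinv_0_lt_compat; nra.
Qed.

Lemma abel_rest_variation a b : 1 <= a -> a <= b ->
  Rabs (abel_rest b - abel_rest a) <= 2 * B / sqrt a - 2 * B / sqrt b.
Proof.
move=> a1 ab.
have -> : 2 * B / sqrt a - 2 * B / sqrt b = - (2 * B) / sqrt b - - (2 * B) / sqrt a.
  by rewrite /Rdiv; ring.
apply: (Rabs_sub_le_of_unit_pieces _ (fun t => - (2 * B) / sqrt t) _ a b a1 ab).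
move=> n x y n0 nx xy yn; have n1 := INR_ge1 _ n0.
rewrite (abel_rest_on_unit_step n x n0) ?(abel_rest_on_unit_step n y n0); try (split; lra).
apply: (Rabs_sub_le_of_deriv_le (abel_rest_on n) (fun t => count_mu2 n / (t * t) - c / t)
  (fun t => - (2 * B) / sqrt t) (fun t => B / (t * sqrt t))) => // t ht.
- by apply: derivable_pt_lim_abel_rest_on; lra.
- by apply: derivable_pt_lim_inv_sqrt; lra.
- by apply: (abel_rest_on_deriv_le n t n0); lra.
Qed.

Lemma count_ratio_approx z : 1 <= z ->
  Rabs (sum_le (fun n => mu n ^ 2) z / z - c) <= B / sqrt z.
Proof.
move=> z1; have s0 := sqrt_lt_R0 z ltac:(lra); have ss := sqrt_sqrt z ltac:(lra).
have -> : sum_le (fun n => mu n ^ 2) z / z - c = (sum_le (fun n => mu n ^ 2) z - c * z) / z.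
  by field; lra.
have -> : B / sqrt z = B * sqrt z / z by rewrite -[X in _ = _ / X]ss; field; lra.
rewrite /Rdiv Rabs_mult (Rabs_pos_eq (/ z)); last by apply/Rlt_le/Rinv_0_lt_compat; lra.
by apply: Rmult_le_compat_r; [apply/Rlt_le/Rinv_0_lt_compat; lra | apply: count_approx].
Qed.

Definition mu2_inv_sub_ln (z : R) : R := sum_le (fun n => mu n ^ 2 / INR n) z - c * ln z.

Lemma mu2_inv_sub_ln_variation z w : 1 <= z -> z <= w ->
  Rabs (mu2_inv_sub_ln z - mu2_inv_sub_ln w) <= 3 * B / sqrt z.
Proof.
move=> z1 zw; have := abel_rest_variation z w z1 zw.
have := count_ratio_approx z z1; have := count_ratio_approx w ltac:(lra).
have -> : mu2_inv_sub_ln z - mu2_inv_sub_ln w =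
  - (abel_rest w - abel_rest z) + (sum_le (fun n => mu n ^ 2) z / z - c)
  + - (sum_le (fun n => mu n ^ 2) w / w - c) by rewrite /mu2_inv_sub_ln /abel_rest; ring.
move: (abel_rest w - _) (_ / z - c) (_ / w - c) => r qz qw hw hz hr.
have : 0 <= B / sqrt w.
  apply: Rmult_le_pos; first exact: count_bound_ge0.
  by apply/Rlt_le/Rinv_0_lt_compat/sqrt_lt_R0; lra.
have := Rabs_triang (- r + qz) (- qw); have := Rabs_triang (- r) qz.
by rewrite !Rabs_Ropp /Rdiv in hw hz hr *; lra.
Qed.

Lemma mu2_inv_sub_ln_sqr K : (0 < K)%N ->
  mu2_inv_sub_ln (INR (K * K)) = sum_mu2_inv (K * K) - c * (2 * ln (INR K)).
Proof.
move=> K0; rewrite /mu2_inv_sub_ln /sum_le nat_floor_INR INR_muln ln_mult; try exact: INR_gt0.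
by rewrite /sum_mu2_inv; ring.
Qed.

Lemma mu2_inv_sub_ln_sqr_approx K : (0 < K)%N ->
  Rabs (mu2_inv_sub_ln (INR (K * K)) - (series_mu - c) * (2 * ln (INR K)) -
        mu2_inv_const) <= sqr_error K.
Proof.
move=> K0; rewrite mu2_inv_sub_ln_sqr //.
have -> : forall S, S - c * (2 * ln (INR K)) - (series_mu - c) * (2 * ln (INR K)) -
  mu2_inv_const = S - series_mu * (2 * ln (INR K)) - mu2_inv_const by move=> S; ring.
exact: sum_mu2_inv_sqr_approx.
Qed.

Lemma count_const_eq : c = series_mu.
Proof.
(* X(K^2) - X(1) is bounded, while X(K^2) drifts like (series_mu - c) log(K^2). *)
suff : 2 * (series_mu - c) = 0 by lra.
apply: (eq0_of_mul_ln_bounded _ (Rabs (mu2_inv_sub_ln 1) + 3 * B + Rabs mu2_inv_const +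
  (14 + Rabs euler_gamma))) => K K0.
have K1 := INR_ge1 _ K0.
have := mu2_inv_sub_ln_variation 1 (INR (K * K)) (Rle_refl 1)
  ltac:(rewrite INR_muln; nra).
rewrite sqrt_1 /Rdiv Rinv_1 Rmult_1_r.
rewrite (_ : 2 * (series_mu - c) * ln (INR K) = (series_mu - c) * (2 * ln (INR K))); last ring.
have := mu2_inv_sub_ln_sqr_approx K K0; have := sqr_error_le K K0.
move: (mu2_inv_sub_ln 1) (mu2_inv_sub_ln (INR (K * K))) => X1 XK.
move: ((series_mu - c) * (2 * ln (INR K))) mu2_inv_const (sqr_error K) => y L e.
move=> eb /Rabs_le_between'[? ?] /Rabs_le_between'[? ?].
have := Rle_abs X1; have := Rle_abs (- X1); have := Rle_abs L; have := Rle_abs (- L).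
by rewrite !Rabs_Ropp => *; apply: Rabs_le; lra.
Qed.

Lemma mu2_inv_sub_ln_approx z : 1 <= z ->
  Rabs (mu2_inv_sub_ln z - mu2_inv_const) <= 3 * B / sqrt z.
Proof.
move=> z1; have [N zN] := INR_unbounded z.
apply: (Rle_of_le_add_vanishing _ _ _ (maxn N 1) vanishes_sqr_error) => K.
rewrite geq_max => /andP[NK K0]; have K1 := INR_ge1 _ K0.
have zK : z <= INR (K * K).
  by rewrite INR_muln; have := le_INR _ _ (leP NK); nra.
have := mu2_inv_sub_ln_variation z (INR (K * K)) z1 zK.
have := mu2_inv_sub_ln_sqr_approx K K0; rewrite -count_const_eq Rminus_diag Rmult_0_l Rminus_0_r.
have := Rabs_triang (mu2_inv_sub_ln z - mu2_inv_sub_ln (INR (K * K)))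
  (mu2_inv_sub_ln (INR (K * K)) - mu2_inv_const).
by rewrite (_ : forall x y w : R, x - y + (y - w) = x - w); [lra | move=> *; ring].
Qed.

End SquarefreeCount.

Lemma series_one_neq0 : series_one <> 0.
Proof. by move=> Z0; have := series_mu_mul_one; rewrite Z0 Rmult_0_r; lra. Qed.

Lemma series_mu_eq : series_mu = / zeta 2.
Proof.
rewrite zeta2_eq; apply: (Rmult_eq_reg_r series_one); last exact: series_one_neq0.
by rewrite series_mu_mul_one Rinv_l //; apply: series_one_neq0.
Qed.

Lemma mu2_inv_const_eq :
  mu2_inv_const = euler_gamma / zeta 2 - 2 * zeta'2 / (zeta 2) ^ 2.
Proof.
have Z0 := series_one_neq0; rewrite /mu2_inv_const.
have -> : series_mu_ln = - series_mu * series_ln / series_one.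
  by have := series_mu_mul_ln; move=> E; field_simplify_eq => //; lra.
by rewrite series_mu_eq zeta'2_eq zeta2_eq; field.
Qed.

Theorem mainTheorem9 :
  (forall z : R, 1 <= z ->
     Rabs (sum_le (fun n => (IZR (mobius n))^2) z - 6 / PI^2 * z) <= 68/100 * sqrt z) ->
  forall z : R, 1 <= z ->
    Rabs (sum_le (fun n => (IZR (mobius n))^2 / INR n) z - ln z / zeta 2
          - (euler_gamma / zeta 2 - 2 * zeta'2 / (zeta 2)^2))
    <= 204/100 / sqrt z.
Proof.
move=> count_approx z z1.
have -> : 204 / 100 = 3 * (68 / 100) by lra.
have -> : ln z / zeta 2 = / zeta 2 * ln z by rewrite /Rdiv Rmult_comm.
rewrite -series_mu_eq -mu2_inv_const_eq -(count_const_eq _ _ count_approx).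
exact: mu2_inv_sub_ln_approx.
Qed.
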